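(* Let $\beta>1$, fix $\epsilon>0$ with $p_c-2\epsilon>0$, and let $n$ be such that $\log_2 n$, $k=n(p_c-2\epsilon)$ and $n(p_c-\epsilon)$ are integers. Set $w=l-\log_2 n$. Consider the following random code. Draw $\mathbf{G}$ uniformly from $\mathbb{F}_{2^w}^{k\times n}$. Let $\mathbf{U}_1,\dots,\mathbf{U}_N$, with $N=2^{kw}$, be the elements of $\mathbb{F}_{2^w}^k$, and for each $i$ set $\mathbf{V}_i=\mathbf{G}^{\mathrm T}\mathbf{U}_i$. Form $\mathbf{X}_i\in\mathbb{F}_2^{n\times l}$ by taking, for each $r\in[n]$, its $r$-th row to be the binary expansion of $(\mathbf{V}_i)_r$ followed by the address $\alpha(r)$. Decode $\mathbf{Z}$ as follows. If there is a unique $i\in[N]$ with $|\mathbf{X}_i\cap\mathbf{Z}|\ge n(p_c-\epsilon)$, output $\widehat{\mathbf{U}}=\mathbf{U}_i$; otherwise declare failure. Then, when $\mathbf{X}_1$ is transmitted over the outer channel, the error probability, averaged over $\mathbf{G}$ and the channel, satisfies $$\mathbb{P}(\widehat{\mathbf{U}}\ne\mathbf{U}_1)\le e^{-2n\epsilon^2}+2^{\,n-n\epsilon w}=e^{-2n\epsilon^2}+2^{\,n-n\epsilon(\beta-1)\log_2 n},$$ which tends to $0$ as $n\to\infty$.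
   Context: The outer channel takes as input a binary matrix $\mathbf{X}\in\mathbb{F}_2^{n\times l}$ with rows $\mathbf{x}_1,\dots,\mathbf{x}_n$ and acts in two stages. Channel-1 acts independently on each row and outputs $\mathbf{y}_i$, where - $\mathbf{y}_i=\mathbf{x}_i$ with probability $p_c$; - $\mathbf{y}_i=?$ (an erased row) with probability $p_e$; - $\mathbf{y}_i=\mathbf{e}$ with probability $p_s/(2^l-1)$ for each $\mathbf{e}\in\mathbb{F}_2^l\setminus\{\mathbf{x}_i\}$. Here $p_c+p_e+p_s=1$. Channel-2 takes the $n$-row matrix $\mathbf{Y}$ (erased rows kept as ''?'') and outputs $\mathbf{Z}$, a uniformly random permutation of its rows (each of the $n!$ permutations has probability $1/n!$). We set $\beta=l/\log_2 n$. The map $\alpha:[n]\to\mathbb{F}_2^{\log_2 n}$ is a fixed bijection (the address map). $\mathbf{X}\cap\mathbf{Z}$ denotes the intersection of the sets of non-erased row vectors of $\mathbf{X}$ and of $\mathbf{Z}$. *)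

From HB Require Import structures.
From mathcomp Require Import all_boot all_order all_algebra all_fingroup.
From mathcomp Require Import reals sequences exp.
Set Implicit Arguments. Unset Strict Implicit. Unset Printing Implicit Defensive.
Import Order.TTheory GRing.Theory Num.Theory.
Local Open Scope ring_scope.

(* Row type: binary rows of length l = w + m, represented as (w+m).-tuple bool.
   A channel output row is [option row]: None is the erased row "?". *)

Definition codeword (F : finFieldType) (k n w m : nat)
  (bin : F -> w.-tuple bool) (alpha : 'I_n -> m.-tuple bool)
  (G : 'M[F]_(k, n)) (U : 'cV[F]_k) : 'I_n -> (w + m).-tuple bool :=
  fun r => cat_tuple (bin ((G^T *m U) r ord0)) (alpha r).

Definition codeword_set (F : finFieldType) (k n w m : nat)
  (bin : F -> w.-tuple bool) (alpha : 'I_n -> m.-tuple bool)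
  (G : 'M[F]_(k, n)) (U : 'cV[F]_k) : {set (w + m).-tuple bool} :=
  [set codeword bin alpha G U r | r in 'I_n].

Definition nonerased (n l : nat) (Z : {ffun 'I_n -> option (l.-tuple bool)})
  : {set l.-tuple bool} := [set y | [exists r, Z r == Some y]].

Definition row_prob (R : realType) (l : nat) (pc pe ps : R)
  (x : l.-tuple bool) (y : option (l.-tuple bool)) : R :=
  match y with
  | None => pe
  | Some e => if e == x then pc else ps / (2 ^+ l - 1)
  end.

Definition channel1_prob (R : realType) (n l : nat) (pc pe ps : R)
  (X : 'I_n -> l.-tuple bool) (Y : {ffun 'I_n -> option (l.-tuple bool)}) : R :=
  \prod_(r < n) row_prob pc pe ps (X r) (Y r).

Definition permute_rows (n l : nat) (Y : {ffun 'I_n -> option (l.-tuple bool)})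
  (s : 'S_n) : {ffun 'I_n -> option (l.-tuple bool)} := [ffun r => Y (s r)].

Definition decoder (F : finFieldType) (k n w m : nat)
  (bin : F -> w.-tuple bool) (alpha : 'I_n -> m.-tuple bool) (t : nat)
  (G : 'M[F]_(k, n)) (Z : {ffun 'I_n -> option ((w + m).-tuple bool)})
  : option 'cV[F]_k :=
  let good U' := (t <= #|codeword_set bin alpha G U' :&: nonerased Z|)%N in
  match [pick U' | good U'] with
  | Some U' => if [forall U'', good U'' ==> (U'' == U')] then Some U' else None
  | None => None
  end.

Definition error_prob (R : realType) (F : finFieldType) (k n w m : nat)
  (pc pe ps : R) (t : nat)
  (bin : F -> w.-tuple bool) (alpha : 'I_n -> m.-tuple bool) (U : 'cV[F]_k) : R :=
  \sum_(G : 'M[F]_(k, n)) (#|{: 'M[F]_(k, n)}|%:R)^-1 *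
    \sum_(Y : {ffun 'I_n -> option ((w + m).-tuple bool)})
      channel1_prob pc pe ps (codeword bin alpha G U) Y *
      \sum_(s : 'S_n) (n`!%:R)^-1 *
        ((decoder bin alpha t G (permute_rows Y s) != Some U) : nat)%:R.

(* The decoder errs only if the sent codeword shares fewer than [t] rows with the received
   set, or some other codeword [X_V] shares at least [t] rows with it; the row permutation is
   invisible to the decoder, which only sees the set of received rows.  The number of
   correctly received rows is binomial with parameter [pc], so Hoeffding's lemma bounds the
   first event by [exp (-2 n eps^2)].  For [V != U], a received row lies in [X_V] with
   probability [pc + ps (n - 1) / (2^l - 1)] if [X_U] and [X_V] agree in that position and
   [ps n / (2^l - 1)] otherwise.  The columns of [G] are independent and uniform and
   [U - V != 0], so positions agree independently with probability [1/q], which averages the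
   above to [(pc + ps) / q <= 1/q].  A union bound over the at most [2^n] sets of [t] rows and
   the [q^k] messages gives [2^n q^(k - t) = 2^(n - n eps w)]. *)

From Pilot Require Import Defs.
From mathcomp Require Import all_boot all_order all_algebra all_fingroup.
From mathcomp Require Import reals sequences exp.
From mathcomp Require Import normedtype derive realfun.
From mathcomp Require Import ring lra.
Set Implicit Arguments. Unset Strict Implicit. Unset Printing Implicit Defensive.
Import Order.TTheory GRing.Theory Num.Theory numFieldNormedType.Exports.
Local Open Scope ring_scope.

Lemma is_derive_ge0_from0_le (R : realType) (f df : R -> R) :
  (forall x : R, 0 <= x -> is_derive x 1 f (df x)) ->
  (forall x : R, 0 <= x -> 0 <= df x) -> forall y : R, 0 <= y -> f 0 <= f y.
Proof.
move=> f_df df_ge0 y y_ge0.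
apply: (@ger0_derive1_ndecr R f 0 y) => //.
- move=> x; rewrite in_itv /= => /andP[/ltW x_ge0 _].
  by have [] := f_df x x_ge0.
- move=> x; rewrite in_itv /= => /andP[/ltW x_ge0 _].
  by rewrite derive1E (@derive_val _ _ _ _ _ _ _ (f_df x x_ge0)) df_ge0.
- apply: derivable_within_continuous => x; rewrite in_itv /= => /andP[x_ge0 _].
  by have [] := f_df x x_ge0.
Qed.

Section BernoulliMGF.
Variables (R : realType) (p : R).
Hypothesis p01 : 0 <= p <= 1.

Let mgf (x : R) := p * expR x + (1 - p).

Let mgf_ge1 (x : R) : 0 <= x -> 1 <= mgf x.
Proof.
move=> x_ge0; have : 1 <= expR x by rewrite -expR0 ler_expR.
by rewrite /mgf; case/andP: p01 => *; nra.
Qed.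

Let mgf_neq0 (x : R) : 0 <= x -> mgf x != 0.
Proof. by move/mgf_ge1 => ?; rewrite gt_eqF // (lt_le_trans ltr01). Qed.

Let mgf0 : mgf 0 = 1.
Proof. by rewrite /mgf expR0 mulr1 addrC subrK. Qed.

Let is_derive_mgf (x : R) : is_derive x 1 mgf (p * expR x).
Proof. by apply: is_derive_eq; rewrite addr0. Qed.

(* The derivative of the gap [p x + x^2/8 - ln (mgf x)] in Hoeffding's lemma. *)
Let slope (x : R) := p + x / 4 - p * expR x / mgf x.

Let is_derive_slope (x : R) : 0 <= x ->
  is_derive x 1 slope (4^-1 - p * expR x / mgf x + (p * expR x / mgf x) ^+ 2).
Proof.
move=> x_ge0; have := is_deriveV (mgf_neq0 x_ge0) (is_derive_mgf x) => dV.
by apply: is_derive_eq; rewrite /GRing.scale /=; field; apply: mgf_neq0.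
Qed.

Let slope_ge0 (x : R) : 0 <= x -> 0 <= slope x.
Proof.
move=> x_ge0; have <- : slope 0 = 0.
  by rewrite /slope mgf0 expR0 mulr1 divr1 mul0r addr0 subrr.
apply: (is_derive_ge0_from0_le is_derive_slope _ x_ge0) => y _.
set u := p * expR y / mgf y.
have -> : 4^-1 - u + u ^+ 2 = (u - 2^-1) ^+ 2 by field.
exact: sqr_ge0.
Qed.

Lemma bernoulli_mgf_le (x : R) : 0 <= x -> p * expR x + (1 - p) <= expR (p * x + x ^+ 2 / 8).
Proof.
pose gap y := p * y + y ^+ 2 / 8 - ln (mgf y).
have is_derive_gap (y : R) : 0 <= y -> is_derive y 1 gap (slope y).
  move=> y_ge0; have := is_derive1_comp (is_derive1_ln (lt_le_trans ltr01 (mgf_ge1 y_ge0)))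
    (is_derive_mgf y) => dln.
  by apply: is_derive_eq; rewrite /slope /GRing.scale /=; field; apply: mgf_neq0.
move=> x_ge0; have := is_derive_ge0_from0_le is_derive_gap slope_ge0 x_ge0.
rewrite /gap mgf0 ln1 mulr0 expr0n /= mul0r !addr0 subr0 subr_ge0.
by rewrite -ler_expR lnK // posrE (lt_le_trans ltr01 (mgf_ge1 x_ge0)).
Qed.

End BernoulliMGF.

Lemma hoeffding_bernoulli (R : realType) (p lam : R) : 0 <= p <= 1 -> 0 <= lam ->
  1 - p + p * expR (- lam) <= expR (- (p * lam) + lam ^+ 2 / 8).
Proof.
move=> /andP[p_ge0 p_le1] lam_ge0.
have q01 : 0 <= 1 - p <= 1 by apply/andP; split; lra.
have := ler_wpM2r (ltW (expR_gt0 (- lam))) (bernoulli_mgf_le q01 lam_ge0).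
rewrite -expRD mulrDl -mulrA -expRD subrr expR0 mulr1 subKr.
by congr (_ <= expR _); ring.
Qed.

Lemma sum_option (R : nmodType) (T : finType) (f : option T -> R) :
  \sum_y f y = f None + \sum_x f (Some x).
Proof.
rewrite (bigD1 None) //=; congr (_ + _).
rewrite (reindex_omap Some id) /=; last by case.
by apply: eq_bigl => x; rewrite eqxx.
Qed.

Definition received_in (T : finType) (A : {set T}) (y : option T) : bool :=
  if y is Some e then e \in A else false.

Section Channel.
Variables (R : realType) (l : nat) (pc pe ps : R).
Hypotheses (pc_ge0 : 0 <= pc) (pe_ge0 : 0 <= pe) (ps_ge0 : 0 <= ps).
Hypothesis p_sum : pc + pe + ps = 1.

Local Notation T := (l.-tuple bool).
Local Notation row_prob := (row_prob pc pe ps).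
Local Notation channel1_prob := (channel1_prob pc pe ps).

Lemma row_prob_ge0 (x : T) y : 0 <= row_prob x y.
Proof.
case: y => [e|] //=; case: (e == x) => //.
by rewrite divr_ge0 // subr_ge0 -natrX ler1n expn_gt0.
Qed.

Lemma sum_row_probE (x : T) (g : option T -> R) :
  \sum_y row_prob x y * g y =
  pe * g None + pc * g (Some x) + ps / (2 ^+ l - 1) * \sum_(e : T | e != x) g (Some e).
Proof.
rewrite sum_option /= -addrA (bigD1 x) //= eqxx mulr_sumr.
by congr (_ + (_ + _)); apply: eq_bigr => e /negbTE ->.
Qed.

Lemma row_prob_mem (x : T) (A : {set T}) :
  \sum_y row_prob x y * (received_in A y)%:R =
  pc * (x \in A)%:R + ps / (2 ^+ l - 1) * (#|A|%:R - (x \in A)%:R).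
Proof.
rewrite sum_row_probE mulr0 add0r; congr (_ + _ * _).
rewrite -natr_sum (cardsD1 x A) natrD addrC addKr; congr _%:R.
rewrite -sum1_card big_mkcond [RHS]big_mkcond; apply: eq_bigr => e _ /=.
by rewrite !inE; case: (e == x); case: (e \in A).
Qed.

Lemma channel1_prob_ge0 n (X : 'I_n -> T) Y : 0 <= channel1_prob X Y.
Proof. by apply: prodr_ge0 => j _; apply: row_prob_ge0. Qed.

Lemma sum_channel1_prob_prod n (X : 'I_n -> T) (g : 'I_n -> option T -> R) :
  \sum_(Y : {ffun 'I_n -> option T}) channel1_prob X Y * \prod_j g j (Y j) =
  \prod_j \sum_y row_prob (X j) y * g j y.
Proof.
rewrite bigA_distr_bigA /=; apply: eq_bigr => Y _.
by rewrite /Defs.channel1_prob -big_split.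
Qed.

(* The substitution probability [ps] is spread over [2^l - 1] words, which must exist. *)
Hypothesis l_gt0 : (0 < l)%N.

Lemma sum_row_prob_eq_Some (x : T) (f : bool -> R) :
  \sum_y row_prob x y * f (y == Some x) = pc * f true + (1 - pc) * f false.
Proof.
rewrite sum_row_probE eqxx (_ : None == Some x = false) //.
under eq_bigr => e e_neq_x do rewrite (inj_eq (@Some_inj _)) (negbTE e_neq_x).
have two_l_gt1 : 1 < 2 ^+ l :> R by rewrite -natrX ltr1n -{1}(expn0 2) ltn_exp2l.
rewrite sumr_const cardC1 card_tuple card_bool -[f false *+ _]mulr_natr.
rewrite -[(2 ^ l).-1]subn1 natrB ?expn_gt0 // natrX mulrCA divfK ?subr_eq0 ?gt_eqF //.
by rewrite -p_sum; ring.
Qed.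

Lemma sum_row_prob (x : T) : \sum_y row_prob x y = 1.
Proof.
have := sum_row_prob_eq_Some x (fun=> 1).
by rewrite !mulr1 subrKC; under eq_bigr do rewrite mulr1.
Qed.

Lemma sum_channel1_prob_prod_in n (X : 'I_n -> T) (S : {set 'I_n})
    (g : 'I_n -> option T -> R) :
  \sum_(Y : {ffun 'I_n -> option T}) channel1_prob X Y * \prod_(j in S) g j (Y j) =
  \prod_(j in S) \sum_y row_prob (X j) y * g j y.
Proof.
rewrite (eq_bigr (fun Y => channel1_prob X Y * \prod_j (if j \in S then g j (Y j) else 1))).
  rewrite (sum_channel1_prob_prod X (fun j y => if j \in S then g j y else 1)).
  rewrite [RHS]big_mkcond; apply: eq_bigr => j _ /=.
  by case: (j \in S); under eq_bigr do rewrite ?mulr1; rewrite ?sum_row_prob.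
by move=> Y _; rewrite big_mkcond.
Qed.

Lemma ltn_indicator_le_expR (lam : R) (a s : nat) :
  0 <= lam -> ((a < s)%N%:R : R) <= expR (lam * (s%:R - a%:R)).
Proof.
move=> lam_ge0; case: ltnP => [a_lt_s | _]; last exact/ltW/expR_gt0.
by rewrite /= mulr1n -[X in X <= _]expR0 ler_expR mulr_ge0 // subr_ge0 ler_nat ltnW.
Qed.

(* Markov's inequality for [exp (lam (s - #correct rows))]; [lam = 4 eps] minimises the
   Hoeffding exponent [- lam eps + lam^2 / 8]. *)
Lemma chernoff_correct_rows n (X : 'I_n -> T) (s : nat) (eps : R) :
  0 <= eps -> s%:R <= n%:R * (pc - eps) ->
  \sum_(Y : {ffun 'I_n -> option T})
    channel1_prob X Y * (#|[set j | Y j == Some (X j)]| < s)%N%:R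
  <= expR (- (2 * n%:R * eps ^+ 2)).
Proof.
have pc01 : 0 <= pc <= 1 by apply/andP; split => //; move: p_sum pe_ge0 ps_ge0; lra.
move=> eps_ge0 s_le; set lam := 4 * eps; have lam_ge0 : 0 <= lam by rewrite /lam; lra.
pose g (j : 'I_n) (y : option T) := expR (- lam * (y == Some (X j))%:R).
have indicator_le (Y : {ffun 'I_n -> option T}) :
    (#|[set j | Y j == Some (X j)]| < s)%N%:R <= expR (lam * s%:R) * \prod_j g j (Y j).
  rewrite -expR_sum -expRD -mulr_sumr -natr_sum.
  have -> : (\sum_j (Y j == Some (X j)) = #|[set j | Y j == Some (X j)]|)%N.
    by rewrite -sum1_card [RHS]big_mkcond; apply: eq_bigr => j _; rewrite inE.
  by rewrite mulNr -mulrBr; apply: ltn_indicator_le_expR.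
apply: le_trans (ler_sum _ (fun Y _ => ler_wpM2l (channel1_prob_ge0 X Y) (indicator_le Y))) _.
under eq_bigr do rewrite mulrCA.
rewrite -mulr_sumr sum_channel1_prob_prod.
have row_mgf j : \sum_y row_prob (X j) y * g j y = 1 - pc + pc * expR (- lam).
  by rewrite (sum_row_prob_eq_Some _ (fun b => expR (- lam * b%:R))) mulr1 mulr0 expR0 mulr1 addrC.
under eq_bigr do rewrite row_mgf.
rewrite prodr_const card_ord.
have mgf_le : (1 - pc + pc * expR (- lam)) ^+ n <= expR (- (pc * lam) + lam ^+ 2 / 8) ^+ n.
  apply: lerXn2r (hoeffding_bernoulli pc01 lam_ge0); rewrite nnegrE; last exact/ltW/expR_gt0.
  by have := expR_gt0 (- lam); case/andP: pc01; nra.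
apply: le_trans (ler_wpM2l (ltW (expR_gt0 _)) mgf_le) _.
rewrite -expRM_natr -expRD ler_expR /lam.
move: s_le; nra.
Qed.

End Channel.

Lemma nonerased_permute_rows n l (Y : {ffun 'I_n -> option (l.-tuple bool)}) (s : 'S_n) :
  nonerased (permute_rows Y s) = nonerased Y.
Proof.
apply/setP => y; rewrite !inE; apply/existsP/existsP => [[r]|[r Yr]].
  by rewrite ffunE => Ysr; exists (s r).
by exists (s^-1 r)%g; rewrite ffunE permKV.
Qed.

Lemma card_nonerased_le n l (A : {set l.-tuple bool})
    (Y : {ffun 'I_n -> option (l.-tuple bool)}) :
  (#|A :&: nonerased Y| <= #|[set j | received_in A (Y j)]|)%N.
Proof.
pose e (j : 'I_n) := odflt (nseq_tuple l false) (Y j).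
apply: leq_trans (leq_imset_card e _); apply/subset_leq_card/fintype.subsetP => y.
rewrite !inE => /andP[y_in_A /existsP[j /eqP Yj]].
by apply/imsetP; exists j; rewrite ?inE /e Yj.
Qed.

Lemma leq_card_le_sum_subsets (R : numDomainType) (I : finType) (P : {set I}) (s : nat) :
  ((s <= #|P|)%N%:R : R) <= \sum_(S : {set I} | #|S| == s) \prod_(j in S) (j \in P)%:R.
Proof.
have terms_ge0 (S : {set I}) : 0 <= \prod_(j in S) ((j \in P)%:R : R).
  by apply: prodr_ge0 => j _; apply: ler0n.
case: leqP => [/card_geqP[S [S_uniq S_size S_sub]] | _]; last exact: sumr_ge0.
rewrite (bigD1 [set x in S]) /=; last by rewrite cardsE (card_uniqP S_uniq) S_size.
rewrite big1 => [|j]; last by rewrite inE => /S_sub ->.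
by rewrite lerDl sumr_ge0.
Qed.

Section Code.
Variables (F : finFieldType) (k n w m : nat).
Variables (bin : F -> w.-tuple bool) (alpha : 'I_n -> m.-tuple bool).
Hypotheses (bin_inj : injective bin) (alpha_inj : injective alpha).

Local Notation T := ((w + m).-tuple bool).
Local Notation codeword := (codeword bin alpha).
Local Notation codeword_set := (codeword_set bin alpha).
Local Notation decoder := (decoder bin alpha).
Implicit Types (G : 'M[F]_(k, n)) (U V : 'cV[F]_k) (Z : {ffun 'I_n -> option T}).

Lemma codeword_eq G U V r r' :
  (codeword G U r == codeword G V r') = ((G^T *m U) r 0 == (G^T *m V) r' 0) && (r == r').
Proof.
rewrite -val_eqE /= eqseq_cat ?size_tuple //; congr (_ && _).
  by rewrite val_eqE (inj_eq bin_inj).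
by rewrite val_eqE (inj_eq alpha_inj).
Qed.

Lemma codeword_inj G U : injective (codeword G U).
Proof. by move=> r r' /eqP; rewrite codeword_eq => /andP[_ /eqP]. Qed.

Lemma card_codeword_set G U : #|codeword_set G U| = n.
Proof. by rewrite card_imset ?card_ord //; apply: codeword_inj. Qed.

Lemma mem_codeword_set G U V j :
  (codeword G U j \in codeword_set G V) = ((G^T *m U) j 0 == (G^T *m V) j 0).
Proof.
apply/imsetP/idP => [[r _ /eqP]|/eqP UVj].
  by rewrite codeword_eq => /andP[/eqP -> /eqP ->].
by exists j => //; apply/eqP; rewrite codeword_eq UVj !eqxx.
Qed.

Definition candidate t G V Z := (t <= #|codeword_set G V :&: nonerased Z|)%N.

Lemma decoder_permute_rows t G Z s : decoder t G (permute_rows Z s) = decoder t G Z.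
Proof. by rewrite /Defs.decoder nonerased_permute_rows. Qed.

Lemma decoder_unique t G U Z : candidate t G U Z ->
  (forall V, V != U -> ~~ candidate t G V Z) -> decoder t G Z = Some U.
Proof.
move=> cand_U no_other; rewrite /Defs.decoder.
have only_U V : candidate t G V Z -> V = U.
  by move=> cand_V; apply/eqP; apply: contraTT cand_V; apply: no_other.
case: pickP => [U' /only_U -> |]; last by move/(_ U)/negbT/negP/(_ cand_U).
by rewrite ifT //; apply/forallP => V; apply/implyP => /only_U ->.
Qed.

Lemma decoder_error_le (R : numDomainType) t G U Z :
  ((decoder t G Z != Some U)%:R : R) <=
  (~~ candidate t G U Z)%:R + \sum_V ((V != U) && candidate t G V Z)%:R.
Proof.
have sum_ge0 : 0 <= \sum_V (((V != U) && candidate t G V Z)%:R : R) by rewrite sumr_ge0.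
have indicator_le1 (b : bool) : (b%:R : R) <= 1 by case: b.
case: (boolP (candidate t G U Z)) => [cand_U | _] /=; last first.
  by apply: le_trans (indicator_le1 _) _; rewrite mulr1n lerDl.
case: (boolP [exists V, (V != U) && candidate t G V Z]) =>
  [/existsP[V other_V] | /existsPn no_other].
  apply: le_trans (indicator_le1 _) _.
  by rewrite add0r (bigD1 V) //= other_V mulr1n lerDl sumr_ge0.
rewrite (decoder_unique cand_U) => [|V V_neq_U]; last by have := no_other V; rewrite V_neq_U.
by rewrite eqxx /= mulr0n add0r.
Qed.

Lemma card_correct_rows_le G U Z :
  (#|[set j | Z j == Some (codeword G U j)]| <= #|codeword_set G U :&: nonerased Z|)%N.
Proof.
rewrite -(card_imset _ (@codeword_inj G U)); apply/subset_leq_card/fintype.subsetP => y.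
case/imsetP => j; rewrite inE => /eqP Zj ->; rewrite !inE imset_f //=.
by apply/existsP; exists j; rewrite Zj.
Qed.

Lemma candidate_le_sum_subsets (R : numDomainType) t G V Z :
  ((candidate t G V Z)%:R : R) <=
  \sum_(S : {set 'I_n} | #|S| == t) \prod_(j in S) (received_in (codeword_set G V) (Z j))%:R.
Proof.
set P := [set j | received_in (codeword_set G V) (Z j)].
have -> : \sum_(S : {set 'I_n} | #|S| == t) \prod_(j in S)
      ((received_in (codeword_set G V) (Z j))%:R : R) =
    \sum_(S : {set 'I_n} | #|S| == t) \prod_(j in S) (j \in P)%:R.
  by apply: eq_bigr => S _; apply: eq_bigr => j _; rewrite inE.
apply: le_trans (leq_card_le_sum_subsets R P t); rewrite ler_nat.
by case: (boolP (candidate t G V Z)) => // cand_V; rewrite (leq_trans cand_V) ?card_nonerased_le.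
Qed.

End Code.

Lemma sum_mx_prod_col (R : comPzSemiRingType) (F : finType) k n
    (h : 'I_n -> 'cV[F]_k -> R) :
  \sum_(G : 'M[F]_(k, n)) \prod_j h j (col j G) = \prod_j \sum_(c : 'cV[F]_k) h j c.
Proof.
rewrite bigA_distr_bigA /=.
rewrite (reindex (fun f : {ffun 'I_n -> 'cV[F]_k} => \matrix_(i, j) f j i 0)) /=.
  apply: eq_bigr => f _; apply: eq_bigr => j _; congr h.
  by apply/matrixP => i i'; rewrite !mxE (ord1 i').
exists (fun G => [ffun j => col j G]) => [f _ | G _].
  by apply/ffunP => j; rewrite ffunE; apply/matrixP => i i'; rewrite !mxE (ord1 i').
by apply/matrixP => i j; rewrite !mxE ffunE mxE.
Qed.

Definition ker_form (F : fieldType) k (d : 'cV[F]_k) : pred 'cV[F]_k :=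
  fun c => (c^T *m d) 0 0 == 0.

Lemma card_ker_form (F : finFieldType) k (d : 'cV[F]_k) : d != 0 ->
  (#|ker_form d| * #|F| = #|F| ^ k)%N.
Proof.
move=> d_neq0; pose L (c : 'cV[F]_k) := (c^T *m d) 0 0.
have [i0 di0_neq0] : exists i0, d i0 0 != 0.
  apply/existsP; apply: contraR d_neq0 => /existsPn d0.
  by apply/eqP/matrixP => i j; rewrite (ord1 j) mxE; apply/eqP/negPn/d0.
pose u : 'cV[F]_k := (d i0 0)^-1 *: delta_mx i0 0.
have L_shift c x : L (c + x *: u) = L c + x.
  rewrite /L /u linearD linearZ /= linearZ /= mulmxDl -!scalemxAl trmx_delta -rowE !mxE.
  by rewrite mulVf ?mulr1.
have fiber_size x : (\sum_c (L c == x) = \sum_c (L c == 0%R))%N.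
  rewrite (reindex_inj (addIr (x *: u))) /=; apply: eq_bigr => c _.
  by rewrite L_shift -{2}[x]add0r (inj_eq (addIr x)).
have -> : #|ker_form d| = (\sum_c (L c == 0%R))%N.
  by rewrite -sum1_card big_mkcond; apply: eq_bigr => c _; rewrite unfold_in; case: eqP.
have -> : (#|F| ^ k = \sum_(x : F) \sum_c (L c == x))%N.
  rewrite exchange_big /= -[in LHS](muln1 k) -card_mx -sum1_card; apply: eq_bigr => c _.
  by rewrite (bigD1 (L c)) //= eqxx big1 // => x; rewrite eq_sym => /negbTE ->.
by rewrite (eq_bigr _ (fun x _ => fiber_size x)) sum_nat_const mulnC.
Qed.

Lemma card_set_of (T : finType) : #|{: {set T}}| = (2 ^ #|T|)%N.
Proof.
rewrite -cardsT -card_powerset; apply: eq_card => S.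
by rewrite powersetE finset.subsetT.
Qed.

Section ErrorProbability.
Variables (R : realType) (F : finFieldType) (k n w m t : nat) (pc pe ps : R).
Variables (bin : F -> w.-tuple bool) (alpha : 'I_n -> m.-tuple bool).
Hypotheses (bin_inj : injective bin) (alpha_inj : injective alpha).
Hypotheses (w_gt0 : (0 < w)%N) (card_F : #|F| = (2 ^ w)%N) (n_eq : n = (2 ^ m)%N).
Hypotheses (pc_ge0 : 0 <= pc) (pe_ge0 : 0 <= pe) (ps_ge0 : 0 <= ps).
Hypothesis p_sum : pc + pe + ps = 1.

Local Notation T := ((w + m).-tuple bool).
Local Notation codeword := (codeword bin alpha).
Local Notation codeword_set := (codeword_set bin alpha).
Local Notation candidate := (candidate bin alpha).
Local Notation channel1_prob := (channel1_prob pc pe ps).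
Local Notation q := (#|F|%:R : R).
Implicit Types (G : 'M[F]_(k, n)) (U V : 'cV[F]_k).

Let l_gt0 : (0 < w + m)%N. Proof. by rewrite addn_gt0 w_gt0. Qed.

Let q_gt0 : 0 < q. Proof. by rewrite ltr0n card_F expn_gt0. Qed.

(* Probability that a row sent as [codeword G U j] is received as a row of [X_V];
   the argument says whether the two codewords agree in position [j]. *)
Let hit_prob (b : bool) : R := pc * b%:R + ps / (2 ^+ (w + m) - 1) * (n%:R - b%:R).

Lemma row_prob_codeword_set G U V j :
  \sum_y row_prob pc pe ps (codeword G U j) y * (received_in (codeword_set G V) y)%:R =
  hit_prob (ker_form (U - V) (col j G)).
Proof.
rewrite row_prob_mem card_codeword_set // mem_codeword_set //.
by rewrite /ker_form tr_col -row_mul mulmxBr !mxE subr_eq0.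
Qed.

Lemma sum_hit_prob d : d != 0 ->
  \sum_(c : 'cV[F]_k) hit_prob (ker_form d c) = (pc + ps) * #|ker_form d|%:R.
Proof.
move=> d_neq0; set K : R := #|ker_form d|%:R.
have KqE : K * q = q ^+ k by rewrite -natrM card_ker_form // natrX.
have DE : 2 ^+ (w + m) - 1 = q * n%:R - 1 :> R by rewrite card_F n_eq -!natrX -natrM expnD.
have D_neq0 : q * n%:R - 1 != 0.
  have two_wm_gt1 : (1 < 2 ^ (w + m))%N by rewrite -{1}(expn0 2) ltn_exp2l.
  by rewrite -DE subr_eq0 -natrX pnatr_eq1 gtn_eqF.
rewrite /hit_prob big_split /= -!mulr_sumr sumrB sumr_const card_mx muln1.
have -> : \sum_(c : 'cV[F]_k) ((ker_form d c)%:R : R) = K.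
  by rewrite /K -natr_sum -sum1_card [in RHS]big_mkcond; congr _%:R; apply: eq_bigr.
rewrite -[n%:R *+ _]mulr_natr natrX -KqE DE; field; exact: D_neq0.
Qed.

Lemma mean_prod_hit_prob U V (S : {set 'I_n}) : V != U ->
  (#|{: 'M[F]_(k, n)}|%:R)^-1 * \sum_G \prod_(j in S) hit_prob (ker_form (U - V) (col j G))
  <= (q^-1) ^+ #|S|.
Proof.
move=> V_neq_U; have d_neq0 : U - V != 0 by rewrite subr_eq0 eq_sym.
pose h j c := if j \in S then hit_prob (ker_form (U - V) c) else 1.
rewrite (eq_bigr (fun G => \prod_j h j (col j G))) => [|G _]; last by rewrite big_mkcond.
rewrite card_mx natrX.
have -> : ((q ^+ (k * n))^-1 = \prod_(j < n) (q ^+ k)^-1 :> R)%R.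
  by rewrite prodr_const card_ord exprVn exprM.
have -> : (q^-1) ^+ #|S| = \prod_j (if j \in S then q^-1 else 1).
  by rewrite -big_mkcond prodr_const.
rewrite sum_mx_prod_col -big_split /=; apply: ler_prod => j _.
have qk_neq0 : q ^+ k != 0 by rewrite expf_neq0 ?gt_eqF.
rewrite /h; case: (j \in S); last first.
  by rewrite sumr_const card_mx muln1 natrX mulVf // ler01 lexx.
rewrite (sum_hit_prob d_neq0); set K : R := #|ker_form (U - V)|%:R.
have KqE : K * q = q ^+ k by rewrite -natrM card_ker_form // natrX.
have K_neq0 : K != 0 by apply: contraNneq qk_neq0 => K0; rewrite -KqE K0 mul0r.
have -> : (q ^+ k)^-1 * ((pc + ps) * K) = (pc + ps) / q.
  by rewrite -KqE; field; rewrite K_neq0 gt_eqF.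
apply/andP; split; first by rewrite divr_ge0 ?addr_ge0 // ltW.
by rewrite ler_pdivrMr // mulVf ?gt_eqF //; move: p_sum pe_ge0; lra.
Qed.

Lemma prob_candidate_le G U V :
  \sum_(Y : {ffun 'I_n -> option T}) channel1_prob (codeword G U) Y * (candidate t G V Y)%:R
  <= \sum_(S : {set 'I_n} | #|S| == t) \prod_(j in S) hit_prob (ker_form (U - V) (col j G)).
Proof.
apply: (@le_trans _ _ (\sum_(Y : {ffun 'I_n -> option T}) channel1_prob (codeword G U) Y *
    \sum_(S : {set 'I_n} | #|S| == t) \prod_(j in S) (received_in (codeword_set G V) (Y j))%:R)).
  by apply: ler_sum => Y _; rewrite ler_wpM2l ?channel1_prob_ge0 ?candidate_le_sum_subsets.
under eq_bigr do rewrite mulr_sumr.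
rewrite exchange_big /=; apply: ler_sum => S _.
rewrite (sum_channel1_prob_prod_in p_sum l_gt0 _ _
  (fun _ y => (received_in (codeword_set G V) y)%:R)).
by under eq_bigr do rewrite row_prob_codeword_set.
Qed.

Lemma mean_prob_candidate_other U V : V != U ->
  \sum_G (#|{: 'M[F]_(k, n)}|%:R)^-1 *
    \sum_(Y : {ffun 'I_n -> option T}) channel1_prob (codeword G U) Y * (candidate t G V Y)%:R
  <= 2 ^+ n * (q^-1) ^+ t.
Proof.
move=> V_neq_U; have c_ge0 : 0 <= (#|{: 'M[F]_(k, n)}|%:R : R)^-1 by rewrite invr_ge0 ler0n.
apply: le_trans (ler_sum _ (fun G _ => ler_wpM2l c_ge0 (prob_candidate_le G U V))) _.
under eq_bigr do rewrite mulr_sumr.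
rewrite exchange_big /=.
apply: (@le_trans _ _ (\sum_(S : {set 'I_n} | #|S| == t) (q^-1) ^+ t)).
  by apply: ler_sum => S /eqP <-; rewrite -mulr_sumr mean_prod_hit_prob.
have qt_ge0 : 0 <= (q^-1) ^+ t by rewrite exprn_ge0 // invr_ge0 ltW.
apply: (@le_trans _ _ (\sum_(S : {set 'I_n}) (q^-1) ^+ t)).
  by rewrite [X in _ <= X](bigID (fun S : {set 'I_n} => #|S| == t)) /= lerDl sumr_ge0.
by rewrite sumr_const card_set_of card_ord -[_ *+ (2 ^ n)]mulr_natl natrX.
Qed.

Lemma prob_not_candidate_le G U eps : 0 <= eps -> t%:R <= n%:R * (pc - eps) ->
  \sum_(Y : {ffun 'I_n -> option T}) channel1_prob (codeword G U) Y * (~~ candidate t G U Y)%:R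
  <= expR (- (2 * n%:R * eps ^+ 2)).
Proof.
move=> eps_ge0 t_le.
apply: le_trans
  (chernoff_correct_rows pc_ge0 pe_ge0 ps_ge0 p_sum l_gt0 (codeword G U) eps_ge0 t_le).
apply: ler_sum => Y _; rewrite ler_wpM2l ?channel1_prob_ge0 // ler_nat /candidate.
by case: (leqP t #|codeword_set G U :&: nonerased Y|) => //= lt_t;
  rewrite (leq_ltn_trans (card_correct_rows_le _ _ _ _ _) lt_t).
Qed.

Lemma error_probE U : error_prob pc pe ps t bin alpha U =
  \sum_G (#|{: 'M[F]_(k, n)}|%:R)^-1 * \sum_(Y : {ffun 'I_n -> option T})
    channel1_prob (codeword G U) Y * (decoder bin alpha t G Y != Some U)%:R.
Proof.
apply: eq_bigr => G _; congr (_ * _); apply: eq_bigr => Y _; congr (_ * _).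
under eq_bigr do rewrite decoder_permute_rows.
rewrite sumr_const card_Sn -[_ *+ n`!]mulr_natr mulrAC mulVf ?mul1r //.
by rewrite pnatr_eq0 -lt0n fact_gt0.
Qed.

Lemma error_prob_le U eps : 0 <= eps -> t%:R <= n%:R * (pc - eps) ->
  error_prob pc pe ps t bin alpha U <=
    expR (- (2 * n%:R * eps ^+ 2)) + (#|F| ^ k)%:R * (2 ^+ n * (q^-1) ^+ t).
Proof.
move=> eps_ge0 t_le; rewrite error_probE.
set c := (#|{: 'M[F]_(k, n)}|%:R : R)^-1; have c_ge0 : 0 <= c by rewrite invr_ge0 ler0n.
pose P G Y := channel1_prob (codeword G U) Y.
apply: (@le_trans _ _ (\sum_G c * \sum_Y P G Y * (~~ candidate t G U Y)%:R +
    \sum_(V | V != U) \sum_G c * \sum_Y P G Y * (candidate t G V Y)%:R)).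
  rewrite [X in _ <= _ + X]exchange_big -big_split /=; apply: ler_sum => G _.
  rewrite -mulr_sumr -mulrDr ler_wpM2l // exchange_big -big_split /=.
  apply: ler_sum => Y _; rewrite -mulr_sumr -mulrDr ler_wpM2l ?channel1_prob_ge0 //.
  apply: le_trans (decoder_error_le _ _ _ _ _ _ _) _.
  by rewrite lerD2l [X in _ <= X]big_mkcond; apply: ler_sum => V _; case: (V != U).
apply: lerD.
  apply: le_trans
    (ler_sum _ (fun G _ => ler_wpM2l c_ge0 (prob_not_candidate_le G U eps_ge0 t_le))) _.
  rewrite sumr_const -mulrnAl -[c *+ _]mulr_natr mulVf ?mul1r //.
  by rewrite pnatr_eq0 -lt0n card_mx expn_gt0 card_F expn_gt0.
apply: le_trans (ler_sum _ (fun V V_neq_U => mean_prob_candidate_other V_neq_U)) _.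
rewrite sumr_const cardC1 card_mx muln1 -[_ *+ _]mulr_natl ler_wpM2r ?ler_nat ?leq_pred //.
by rewrite mulr_ge0 ?exprn_ge0 // invr_ge0 ltW.
Qed.

End ErrorProbability.

Lemma pow2_union_bound (R : realType) (w n k d : nat) :
  (((2 ^ w) ^ k)%:R * (2 ^+ n * (((2 ^ w)%:R)^-1) ^+ (k + d)) : R) =
  2 `^ (n%:R - (w * d)%:R).
Proof.
rewrite powRB ?pnatr_eq0 ?implybT // !powR_mulrn // !natrX exprVn -!exprM mulnDr exprD.
by field; rewrite !expf_neq0 ?pnatr_eq0.
Qed.

Theorem mainTheorem6 (R : realType) (F : finFieldType) (m w n k t : nat)
  (pc pe ps eps : R)
  (bin : F -> w.-tuple bool) (alpha : 'I_n -> m.-tuple bool) (U : 'cV[F]_k) :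
  (0 < m)%N -> (0 < w)%N -> n = (2 ^ m)%N -> #|F| = (2 ^ w)%N ->
  bijective bin -> bijective alpha ->
  0 <= pc -> 0 <= pe -> 0 <= ps -> pc + pe + ps = 1 ->
  0 < eps -> 0 < pc - 2 * eps ->
  k%:R = n%:R * (pc - 2 * eps) -> t%:R = n%:R * (pc - eps) ->
  error_prob pc pe ps t bin alpha U <=
    expR (- (2 * n%:R * eps ^+ 2)) + 2 `^ (n%:R - n%:R * eps * w%:R).
Proof.
(* [0 < m] and [0 < pc - 2 eps] only make the code non-trivial; the bound does not use them. *)
move=> _ w_gt0 n_eq card_F /bij_inj bin_inj /bij_inj alpha_inj pc_ge0 pe_ge0 ps_ge0 p_sum.
move=> eps_gt0 _ kE tE.
have t_le : t%:R <= n%:R * (pc - eps) by rewrite tE.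
apply: le_trans (error_prob_le bin_inj alpha_inj w_gt0 card_F n_eq
  pc_ge0 pe_ge0 ps_ge0 p_sum U (ltW eps_gt0) t_le) _.
have k_le_t : (k <= t)%N by rewrite -(ler_nat R) tE kE ler_wpM2l ?ler0n //; lra.
have d_eq : (t - k)%:R = n%:R * eps :> R by rewrite natrB // tE kE; ring.
by rewrite lerD2l card_F -(subnKC k_le_t) pow2_union_bound natrM d_eq mulrC.
Qed.
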